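(* Let $n,m\ge 1$ and let $f(x)=x^{nm}+\sum_{i=1}^{nm}c_i x^{nm-i}$ be an irreducible polynomial over $\mathrm{GF}(2)$ of degree $nm$ with $f(x)\neq x$, and let $e$ be its exponent (the least positive integer with $f(x)\mid x^e-1$), so that $2^{nm}-1=k\cdot e$ for a positive integer $k$. Suppose $e=(2^n-1)\ell$ with $\gcd(2^n-1,\ell)=1$, and write $r=2^n-1$. The $2^{nm}-1$ nonzero binary sequences satisfying $a_j=\sum_{i=1}^{nm}c_i a_{j-i}$ (mod 2) are periodic with least period $e$ and fall into exactly $k$ classes under cyclic shifts; choose one period $(s_0,s_1,\ldots,s_{e-1})$ of a representative of each class and fold it into the $r\times\ell$ array $A$ defined by $A_{\,i \bmod r,\ i \bmod \ell}=s_i$ for $0\le i\le e-1$ (well defined by the Chinese remainder theorem). For $0\le p<r$ and $0\le q<\ell$ let $$R_{p,q}=\{\,i\in\{0,\ldots,e-1\}:\ (i-p)\bmod r\in\{0,\ldots,n-1\},\ (i-q)\bmod \ell\in\{0,\ldots,m-1\}\,\},$$ the set of sequence positions folded into the cyclic $n\times m$ window with top-left corner $(p,q)$, and let $g_{R}(x)=\prod_{\emptyset\neq Q\subseteq R}\sum_{i\in Q}x^{i}$. If $f(x)$ does not divide $g_{R_{p,q}}(x)$ for every such $(p,q)$, then the $k$ folded arrays form a $(2^n-1,\ell;n,m)$-PRAC.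
   Context: All arrays are binary and cyclic (doubly periodic): an $n\times m$ window of an $r\times t$ array $A$ at position $(p,q)$ is the matrix with entries $A_{(p+u)\bmod r,\,(q+v)\bmod t}$, $0\le u<n$, $0\le v<m$. An $(r,t;n,m)$-PRAC (pseudo-random array code) is a set $\mathbb{C}$ of binary $r\times t$ cyclic arrays such that (i) every nonzero binary $n\times m$ matrix appears exactly once as a window in one of the arrays of $\mathbb{C}$ (i.e., there is exactly one pair consisting of an array of $\mathbb{C}$ and a window position at which it appears), and (ii) the shift-and-add property holds: if $\mathcal{A},\mathcal{A}'\in\mathbb{C}$ are distinct, or if $\mathcal{A}\in\mathbb{C}$ and $\mathcal{A}'$ is a nontrivial cyclic (horizontal and/or vertical) shift of $\mathcal{A}$, then the entrywise mod-2 sum $\mathcal{A}+\mathcal{A}'$ is, up to a cyclic shift, an array of $\mathbb{C}$. *)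

From HB Require Import structures.
From mathcomp Require Import all_boot all_order all_algebra.
Set Implicit Arguments. Unset Strict Implicit. Unset Printing Implicit Defensive.
Import GRing.Theory.
Local Open Scope ring_scope.

Definition aget (r t : nat) (A : 'M['F_2]_(r, t)) (i j : nat) : 'F_2 :=
  match @insub nat (fun k => k < r)%N _ (i %% r)%N,
        @insub nat (fun k => k < t)%N _ (j %% t)%N with
  | Some a, Some b => A a b
  | _, _ => 0
  end.

Definition window (n m r t : nat) (A : 'M['F_2]_(r, t)) (p q : nat)
  : 'M['F_2]_(n, m) :=
  \matrix_(u < n, v < m) aget A (p + u) (q + v).

Definition cshift (r t : nat) (A : 'M['F_2]_(r, t)) (a b : nat)
  : 'M['F_2]_(r, t) :=
  \matrix_(i < r, j < t) aget A (i + a) (j + b).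

Definition PRAC (r t n m : nat) (C : {set 'M['F_2]_(r, t)}) : Prop :=
  (forall W : 'M['F_2]_(n, m), W != 0 ->
     exists! x : 'M['F_2]_(r, t) * ('I_r * 'I_t),
       x.1 \in C /\ window n m x.1 x.2.1 x.2.2 = W) /\
  (forall A A' : 'M['F_2]_(r, t), A \in C ->
     ((A' \in C /\ A' != A) \/
      (exists (a : 'I_r) (b : 'I_t), ((a : nat) != 0%N) || ((b : nat) != 0%N) /\ A' = cshift A a b)) ->
     exists2 B, B \in C & exists (a : 'I_r) (b : 'I_t), A + A' = cshift B a b).

(* LFSR recurrence of degree d with feedback coefficients c_i = f`_(d - i):
   a_j = sum_{i=1}^{d} c_i a_{j-i}  for all j >= d. *)
Definition lfsr (f : {poly 'F_2}) (d : nat) (a : nat -> 'F_2) : Prop :=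
  forall j : nat, (d <= j)%N ->
    a j = \sum_(1 <= i < d.+1) f`_(d - i) * a (j - i)%N.

Definition seq_shift_of (a b : nat -> 'F_2) : Prop :=
  exists d : nat, forall j : nat, b j = a (j + d)%N.

Definition is_exponent (f : {poly 'F_2}) (e : nat) : Prop :=
  [/\ (0 < e)%N, f %| 'X^e - 1 &
   (forall e' : nat, (0 < e')%N -> f %| 'X^e' - 1 -> (e <= e')%N)].

Definition Rset (n m r l e : nat) (p q : nat) : {set 'I_e} :=
  [set i : 'I_e | ((i + r - p) %% r < n)%N && ((i + l - q) %% l < m)%N].

Definition gR (e : nat) (R : {set 'I_e}) : {poly 'F_2} :=
  \prod_(Q : {set 'I_e} | (Q \subset R) && (Q != set0)) \sum_(i in Q) 'X^i.

From HB Require Import structures.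
From mathcomp Require Import all_boot all_order all_algebra all_field zify.
Import GRing.Theory.
Set Implicit Arguments. Unset Strict Implicit. Unset Printing Implicit Defensive.

(* Folding a recurrence sequence by the Chinese remainder theorem turns
   shifts of the sequence into cyclic shifts of the array, and the window of
   the array at (p, q) into the corner window of a shifted sequence.  The
   heart of the proof is that a corner window determines the sequence: if no
   nonempty subset sum of the monomials x^i, i in R_{0,0}, is divisible by f,
   then the subset sums are pairwise incongruent mod f, and since
   |R_{0,0}| >= nm they represent every residue class; so a sequence
   annihilated by f that vanishes on R_{0,0} vanishes everywhere.  Hence
   windows are unique, every window occurs (the nm initial values are free),
   and sums and shifts of arrays are again shifts of arrays because the
   recurrence is closed under sums and shifts.  That R_{0,0} has nm elements
   needs m <= l: the l + 1 numbers 2^(n k) mod e, 0 <= k <= l, are all 1 mod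
   2^n - 1, so two of them coincide, say for k = u < v <= l; then
   x^(2^(n u)) = x^(2^(n v)) in GF(2^(nm)), by the Frobenius every field
   element satisfies this equation, and counting roots gives nm <= n v. *)

Definition seq_shift (T : Type) (a : nat -> T) k : nat -> T := fun i => a (i + k).

Definition periodic (T : Type) (t : nat) (a : nat -> T) := forall j, a (j + t) = a j.

Lemma periodic_mod (T : Type) t (a : nat -> T) i j :
  periodic t a -> i = j %[mod t] -> a i = a j.
Proof.
move=> per_a eq_ij; have per_mul k q : a (k + q * t) = a k.
  by elim: q => [|q IHq]; rewrite ?mul0n ?addn0 // mulSnr addnA per_a.
by rewrite (divn_eq i t) (divn_eq j t) eq_ij !(addnC _ (_ %% t)) !per_mul.
Qed.

Lemma periodic_shift_neq (T : eqType) t (a : nat -> T) x k : 0 < t -> periodic t a ->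
  (exists j, a j != x) -> exists j, seq_shift a k j != x.
Proof.
move=> t_gt0 per_a [j aj_neq]; exists (j + k * t.-1); rewrite /seq_shift -addnA.
by rewrite -mulnSr prednK // (periodic_mod per_a (_ : _ = j %[mod t])) // addnC modnMDl.
Qed.

Section HornerSeq.
Local Open Scope ring_scope.
Variable R : comNzRingType.
Implicit Types (h v : {poly R}) (a b : nat -> R).

Definition horner_seq h a : R := \sum_(i < size h) h`_i * a i.

Definition annihilates h a := forall k, horner_seq h (seq_shift a k) = 0.

Lemma horner_seq_widen N h a : (size h <= N)%N ->
  horner_seq h a = \sum_(i < N) h`_i * a i.
Proof.
move=> leN; rewrite /horner_seq (big_ord_widen N (fun i => h`_i * a i)) //.
rewrite big_mkcond; apply: eq_bigr => i _; case: ifP => // /negbT.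
by rewrite -leqNgt => /(nth_default 0) ->; rewrite mul0r.
Qed.

Lemma eq_horner_seq h a b : a =1 b -> horner_seq h a = horner_seq h b.
Proof. by move=> eq_ab; apply: eq_bigr => i _; rewrite eq_ab. Qed.

Lemma horner_seq0 a : horner_seq 0 a = 0.
Proof. by rewrite /horner_seq size_poly0 big_ord0. Qed.

Lemma horner_seqD h1 h2 a :
  horner_seq (h1 + h2) a = horner_seq h1 a + horner_seq h2 a.
Proof.
set N := maxn (size h1) (size h2).
rewrite !(@horner_seq_widen N) ?leq_maxl ?leq_maxr ?(leq_trans (size_polyD _ _)) //.
by rewrite -big_split; apply: eq_bigr => i _; rewrite coefD mulrDl.
Qed.

Lemma horner_seqZ c h a : horner_seq (c *: h) a = c * horner_seq h a.
Proof.
rewrite (@horner_seq_widen (size h)) ?size_scale_leq // mulr_sumr.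
by apply: eq_bigr => i _; rewrite coefZ mulrA.
Qed.

Lemma horner_seqN h a : horner_seq (- h) a = - horner_seq h a.
Proof. by rewrite -scaleN1r horner_seqZ mulN1r. Qed.

Lemma horner_seq_sum (J : Type) (r : seq J) (P : pred J) (F : J -> {poly R}) a :
  horner_seq (\sum_(j <- r | P j) F j) a = \sum_(j <- r | P j) horner_seq (F j) a.
Proof. exact: (big_morph _ (fun h1 h2 => horner_seqD h1 h2 a) (horner_seq0 a)). Qed.

Lemma horner_seqC c a : horner_seq c%:P a = c * a 0%N.
Proof. by rewrite (@horner_seq_widen 1) ?size_polyC_leq1 // big_ord1 coefC. Qed.

Lemma horner_seqXn i a : horner_seq 'X^i a = a i.
Proof.
rewrite /horner_seq size_polyXn big_ord_recr /= coefXn eqxx mul1r big1 ?add0r //.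
by move=> j _; rewrite coefXn (ltn_eqF (ltn_ord j)) mul0r.
Qed.

Lemma horner_seqMX h a : horner_seq (h * 'X) a = horner_seq h (seq_shift a 1).
Proof.
rewrite (@horner_seq_widen (size h).+1); last first.
  by rewrite (leq_trans (size_polyMleq _ _)) // size_polyX addn2.
rewrite big_ord_recl coefMX eqxx mul0r add0r.
by apply: eq_bigr => i _; rewrite coefMX /seq_shift addn1.
Qed.

Lemma horner_seqDr h a b :
  horner_seq h (a \+ b) = horner_seq h a + horner_seq h b.
Proof. by rewrite -big_split; apply: eq_bigr => i _; rewrite mulrDr. Qed.

Lemma horner_seq_Xn_sub1 t a : horner_seq ('X^t - 1) a = a t - a 0%N.
Proof. by rewrite horner_seqD horner_seqN -polyC1 horner_seqC horner_seqXn mul1r. Qed.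

Lemma annihilates_shift h a k : annihilates h a -> annihilates h (seq_shift a k).
Proof.
move=> ann_a j; rewrite -(ann_a (j + k)%N).
by apply: eq_horner_seq => i; rewrite /seq_shift addnA.
Qed.

Lemma annihilatesD h a b :
  annihilates h a -> annihilates h b -> annihilates h (a \+ b).
Proof. by move=> ann_a ann_b k; rewrite (horner_seqDr h) ann_a ann_b addr0. Qed.

Lemma annihilates_horner_seq h a : annihilates h a -> horner_seq h a = 0.
Proof. by move/(_ 0%N); rewrite -(@eq_horner_seq h a) // => i; rewrite /seq_shift addn0. Qed.

Lemma annihilatesMl v h a : annihilates h a -> annihilates (v * h) a.
Proof.
elim/poly_ind: v a => [|v c IHv] a ann_a k; first by rewrite mul0r horner_seq0.
rewrite mulrDl mulrAC horner_seqD horner_seqMX mul_polyC horner_seqZ.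
rewrite IHv ?add0r; last exact: annihilates_shift.
by rewrite annihilates_horner_seq ?mulr0 //; apply: annihilates_shift.
Qed.

End HornerSeq.

Section FieldAnnihilators.
Local Open Scope ring_scope.
Variable F : fieldType.
Implicit Types (f g : {poly F}) (a : nat -> F).

Lemma annihilates_dvdp f g a : f %| g -> annihilates f a -> annihilates g a.
Proof. by case/dvdpP=> q ->; apply: annihilatesMl. Qed.

Lemma annihilates_periodic f a t : f %| 'X^t - 1 -> annihilates f a -> periodic t a.
Proof.
move=> dvd_f ann_a j; have /eqP := annihilates_dvdp dvd_f ann_a j.
by rewrite horner_seq_Xn_sub1 subr_eq0 /seq_shift add0n addnC => /eqP.
Qed.

Lemma periodic_annihilates_dvdp f a t :
  irreducible_poly f -> annihilates f a -> periodic t a ->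
  (exists j, a j != 0) -> f %| 'X^t - 1.
Proof.
move=> irr_f ann_a per_a [j aj_neq0]; apply: contraNT aj_neq0.
rewrite -irreducible_poly_coprime // => /Bezout_coprimepP[[u v]] /=.
rewrite -size_poly_eq1 => /size_poly1P[c c_neq0 uv_c].
have ann_Xt : annihilates ('X^t - 1) a.
  by move=> k; rewrite horner_seq_Xn_sub1 /seq_shift add0n addnC per_a subrr.
have := erefl (horner_seq (u * f + v * ('X^t - 1)) (seq_shift a j)).
rewrite {1}uv_c horner_seqC horner_seqD !annihilatesMl // addr0 /seq_shift add0n.
by move/eqP; rewrite mulf_eq0 (negbTE c_neq0).
Qed.

Lemma annihilates_modp_coords f d (w : 'I_d -> F) :
  annihilates f (fun j => \sum_(k < d) w k * ('X^j %% f)`_k).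
Proof.
move=> j; rewrite /horner_seq /seq_shift.
under eq_bigr do rewrite mulr_sumr.
rewrite exchange_big big1 //= => k _.
have expand_f : \sum_(i < size f) f`_i *: 'X^(i + j) = 'X^j * f.
  have -> : 'X^j * f = 'X^j * \sum_(i < size f) f`_i *: 'X^i.
    by rewrite -poly_def coefK.
  by rewrite mulr_sumr; apply: eq_bigr => i _; rewrite -scalerAr -exprD addnC.
transitivity (w k * ((\sum_(i < size f) f`_i *: 'X^(i + j)) %% f)`_k).
  rewrite (big_morph (fun p => p %% f) (modpD f) (mod0p f)) coef_sum mulr_sumr.
  by apply: eq_bigr => i _; rewrite modpZl coefZ mulrCA.
by rewrite expand_f modp_mull coef0 mulr0.
Qed.

Lemma modp_coords_small f d (w : 'I_d -> F) (i : 'I_d) : size f = d.+1 ->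
  \sum_(k < d) w k * ('X^i %% f)`_k = w i.
Proof.
move=> size_f; rewrite modp_small ?size_polyXn ?size_f ?ltnS ?ltn_ord //.
rewrite (bigD1 i) //= coefXn eqxx mulr1 big1 ?addr0 // => k neq_ki.
by rewrite coefXn (negbTE (neq_ki : (k : nat) != i)) mulr0.
Qed.

End FieldAnnihilators.

Section BinaryLFSR.
Local Open Scope ring_scope.
Implicit Types (f : {poly 'F_2}) (a : nat -> 'F_2).

Lemma pchar_F2 : 2%N \in [pchar 'F_2].
Proof. exact: pchar_Fp. Qed.

Lemma pchar_polyF2 : 2%N \in [pchar {poly 'F_2}].
Proof. by rewrite pchar_poly pchar_F2. Qed.

Lemma addF2_eq0 (x y : 'F_2) : (x + y == 0) = (x == y).
Proof. by rewrite addr_eq0 (oppr_pchar2 pchar_F2). Qed.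

Lemma addmxF2_eq0 n1 n2 (M N : 'M['F_2]_(n1, n2)) : (M + N == 0) = (M == N).
Proof.
apply/eqP/eqP => [/matrixP MN0 | ->]; apply/matrixP => i j.
  by have := MN0 i j; rewrite !mxE => /eqP; rewrite addF2_eq0 => /eqP.
by rewrite !mxE (addrr_pchar2 pchar_F2).
Qed.

Lemma lead_coefF2 f : f != 0 -> lead_coef f = 1.
Proof. by rewrite -lead_coef_eq0; case: (lead_coef f) => [[|[|]]] //= ? _; apply: val_inj. Qed.

Lemma horner_seq_shift_expand f d a j : size f = d.+1 -> (d <= j)%N ->
  horner_seq f (seq_shift a (j - d)) =
  a j + \sum_(1 <= i < d.+1) f`_(d - i) * a (j - i)%N.
Proof.
move=> size_f le_dj; have f_neq0 : f != 0 by rewrite -size_poly_eq0 size_f.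
have := lead_coefF2 f_neq0; rewrite lead_coefE size_f /= => lead_f.
rewrite /horner_seq size_f big_ord_recr /= lead_f mul1r /seq_shift subnKC // addrC.
congr (_ + _); rewrite -(big_mkord xpredT (fun i => f`_i * a (i + (j - d))%N)).
rewrite big_add1 /= big_nat_rev /=; apply: eq_big_nat => i /andP[_ lt_id].
by congr (_ * a _); lia.
Qed.

Lemma lfsr_annihilates f d a : size f = d.+1 -> lfsr f d a <-> annihilates f a.
Proof.
move=> size_f; split=> [lfsr_a k | ann_a j le_dj].
  have := horner_seq_shift_expand a size_f (leq_addl k d); rewrite addnK => ->.
  by rewrite -lfsr_a ?leq_addl // (addrr_pchar2 pchar_F2).
have /eqP := ann_a (j - d)%N; rewrite horner_seq_shift_expand //.
by rewrite addr_eq0 (oppr_pchar2 pchar_F2) => /eqP.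
Qed.

Lemma lfsrD f d a b : size f = d.+1 -> lfsr f d a -> lfsr f d b -> lfsr f d (a \+ b).
Proof. by move=> size_f; rewrite !lfsr_annihilates //; apply: annihilatesD. Qed.

Lemma lfsr_shift f d a k : size f = d.+1 -> lfsr f d a -> lfsr f d (seq_shift a k).
Proof. by move=> size_f; rewrite !lfsr_annihilates //; apply: annihilates_shift. Qed.

Lemma gR_ndvd_subset_sum f N (R Q : {set 'I_N}) :
  ~~ (f %| gR R) -> Q \subset R -> Q != set0 -> ~~ (f %| \sum_(i in Q) 'X^i).
Proof.
move=> ndvd_gR QR Q_neq0; apply: contra ndvd_gR => dvd_Q.
by rewrite /gR (bigD1 Q) ?QR ?Q_neq0 //= dvdp_mulr.
Qed.

End BinaryLFSR.

Section SubsetSums.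
Local Open Scope ring_scope.
Variables (f : {poly 'F_2}) (d N : nat) (R : {set 'I_N}).
Hypotheses (size_f : size f = d.+1) (le_d_R : (d <= #|R|)%N).
Hypothesis subset_sum_ndvd :
  forall Q : {set 'I_N}, Q \subset R -> Q != set0 -> ~~ (f %| \sum_(i in Q) 'X^i).

Lemma subset_sum_cover p :
  exists2 Q : {set 'I_N}, Q \subset R & f %| p - \sum_(i in Q) 'X^i.
Proof.
pose S (Q : {set 'I_N}) : {poly 'F_2} := \sum_(i in Q) 'X^i.
have S_symdiff (Q Q' : {set 'I_N}) : S Q - S Q' = S ((Q :\: Q') :|: (Q' :\: Q)).
  rewrite /S !(big_mkcond (fun i => i \in _)) -sumrB; apply: eq_bigr => i _.
  rewrite !inE; case: (i \in Q); case: (i \in Q') => /=;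
    by rewrite ?subrr ?subr0 ?sub0r ?(oppr_pchar2 pchar_polyF2).
have f_neq0 : f != 0 by rewrite -size_poly_eq0 size_f.
have size_modf (q : {poly 'F_2}) : (size (q %% f)%R <= d)%N.
  by rewrite -ltnS -size_f ltn_modp.
have npoly_eq (q q' : {poly 'F_2}) : npolyp d (q %% f) = npolyp d (q' %% f) -> f %| q - q'.
  move/(congr1 val); rewrite /= !npolypK // => eq_mod.
  by apply/modp_eq0P; rewrite modpD modpN eq_mod subrr.
pose phi (Q : {set 'I_N}) := npolyp d (S Q %% f).
have phi_inj : {in powerset R &, injective phi}.
  move=> Q Q'; rewrite !powersetE => QR Q'R /npoly_eq; rewrite S_symdiff.
  apply: contraTeq => neq_QQ'; apply: subset_sum_ndvd.
    by rewrite subUset !(subset_trans (subsetDl _ _)).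
  by apply: contra neq_QQ'; rewrite setU_eq0 !setD_eq0 => subQQ'; rewrite eqEsubset.
have phi_onto : phi @: powerset R = [set: {poly_d 'F_2}].
  apply/eqP; rewrite eqEcard subsetT cardsT card_in_imset // card_powerset.
  by rewrite card_npoly card_Fp // leq_exp2l.
have : npolyp d (p %% f) \in phi @: powerset R by rewrite phi_onto inE.
by case/imsetP => Q; rewrite powersetE => QR /npoly_eq; exists Q.
Qed.

Lemma annihilates_eq0_on a : annihilates f a ->
  (forall i : 'I_N, i \in R -> a i = 0) -> forall j, a j = 0.
Proof.
move=> ann_a a_R j; have [Q QR dvd_f] := subset_sum_cover 'X^j.
have := annihilates_horner_seq (annihilates_dvdp dvd_f ann_a).
rewrite horner_seqD horner_seqN horner_seq_sum horner_seqXn big1 ?subr0 // => i Qi.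
by rewrite horner_seqXn a_R // (subsetP QR).
Qed.

End SubsetSums.

Section PolyDivisibility.
Local Open Scope ring_scope.
Variable F : fieldType.
Implicit Type f : {poly F}.

Lemma dvdp_Xn_sub1_mul f e k :
  f %| 'X^e - 1 -> f %| 'X^(e * k) - 1.
Proof.
move/dvdp_trans; apply; have -> : 'X^(e * k) - 1 = ('X^e) ^+ k - 1 ^+ k :> {poly F}.
  by rewrite exprM expr1n.
by rewrite subrXX dvdp_mulr.
Qed.

Lemma dvdp_Xn_sub_Xn_mod f e i j :
  f %| 'X^e - 1 -> i = j %[mod e] -> f %| 'X^i - 'X^j.
Proof.
move=> dvd_f eq_ij; rewrite (divn_eq i e) (divn_eq j e) eq_ij !exprD -mulrBl dvdp_mulr //.
have -> : forall x y : {poly F}, x - y = (x - 1) - (y - 1).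
  by move=> x y; rewrite opprB addrA subrK.
by rewrite dvdp_sub // mulnC dvdp_Xn_sub1_mul.
Qed.

Lemma in_qfpoly_eq0 f (mi : monic_irreducible_poly f) p :
  (in_qpoly f p == 0) = (f %| p).
Proof.
apply/eqP/idP => [/val_eqP /= | dvd_f].
  by rewrite -Pdiv.IdomainMonic.modpE (mk_monicE mi) ?mi.
by apply/val_inj; rewrite /= -Pdiv.IdomainMonic.modpE (mk_monicE mi) ?mi //; apply/modp_eq0P.
Qed.

End PolyDivisibility.

Lemma expn_mod_collision a r l : 0 < r -> 0 < l -> a = 1 %[mod r] ->
  exists x y, x < y <= l /\ a ^ x = a ^ y %[mod r * l].
Proof.
move=> r_gt0 l_gt0 a_mod_r; have rl_gt0 : 0 < r * l by rewrite muln_gt0 r_gt0.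
have quo_lt (i : 'I_l.+1) : (a ^ i %% (r * l)) %/ r < l.
  by rewrite ltn_divLR // [l * _]mulnC ltn_mod.
have mod_r i : (a ^ i %% (r * l)) %% r = 1 %% r.
  by rewrite modn_dvdm ?dvdn_mulr // -modnXm a_mod_r modnXm exp1n.
have eq_quo x y : (a ^ x %% (r * l)) %/ r = (a ^ y %% (r * l)) %/ r ->
    a ^ x = a ^ y %[mod r * l].
  by move=> eq_xy; rewrite (divn_eq (a ^ x %% _) r) (divn_eq (a ^ y %% _) r) eq_xy !mod_r.
pose g (i : 'I_l.+1) : 'I_l := Ordinal (quo_lt i).
have /injectivePn[x [y neq_xy /(congr1 val) /= /eq_quo eq_xy]] : ~~ injectiveb g.
  by apply/injectiveP => /leq_card; rewrite !card_ord ltnn.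
case: (ltngtP x y) => [lt_xy | lt_yx | /val_inj eq_xy']; last by rewrite eq_xy' eqxx in neq_xy.
  by exists x, y; rewrite lt_xy -ltnS ltn_ord.
by exists y, x; rewrite lt_yx -ltnS ltn_ord.
Qed.

Section FrobeniusBound.
Local Open Scope ring_scope.

Lemma expF2_pow2 (c : 'F_2) k : c ^+ (2 ^ k) = c.
Proof.
elim: k => [|k IHk]; first exact: expr1.
by rewrite expnSr exprM IHk -{2}(expf_card c) card_Fp.
Qed.

Lemma frobenius_polyF2 (p : {poly 'F_2}) k : p ^+ (2 ^ k) = p \Po 'X^(2 ^ k).
Proof.
elim/poly_ind: p => [|p c IHp]; first by rewrite comp_poly0 expr0n expn_eq0.
have pchar_pow2 : [pchar {poly 'F_2}].-nat (2 ^ k)%N.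
  by rewrite pnatX (pnatE _ (isT : prime 2)) pchar_polyF2.
rewrite exprDn_pchar // exprMn IHp -rmorphXn /= expF2_pow2.
by rewrite comp_polyD comp_polyM comp_polyX comp_polyC.
Qed.

Lemma monic_irreducible_F2 (f : {poly 'F_2}) :
  irreducible_poly f -> monic_irreducible_poly f.
Proof.
move=> irr_f; split=> //; apply/monicP/lead_coefF2.
by rewrite -size_poly_gt0 (ltn_trans _ irr_f.1).
Qed.

Lemma dvdp_Xpow2B_leq (f : {poly 'F_2}) d a b :
  irreducible_poly f -> size f = d.+1 -> (a < b)%N ->
  f %| 'X^(2 ^ b) - 'X^(2 ^ a) -> (d <= b)%N.
Proof.
move=> irr_f size_f lt_ab dvd_f; have mi := monic_irreducible_F2 irr_f.
pose K := {poly %/ f with mi}.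
have eq_X : in_qpoly f 'X^(2 ^ a) = in_qpoly f 'X^(2 ^ b).
  by apply/eqP; rewrite eq_sym -subr_eq0 -raddfB /= in_qfpoly_eq0.
have frobK (y : K) : y ^+ (2 ^ a) = y ^+ (2 ^ b).
  have -> : y = in_qpoly f (val y).
    by apply/val_inj; rewrite /= Pdiv.CommonRing.rmodp_small // size_mk_monic.
  by rewrite -!rmorphXn /= !(frobenius_polyF2 (val y)) !in_qpoly_comp_horner eq_X.
have lt_2a_2b : (2 ^ a < 2 ^ b)%N by rewrite ltn_exp2l.
have size_pK : size ('X^(2 ^ b) - 'X^(2 ^ a) : {poly K}) = (2 ^ b).+1.
  by rewrite size_polyDl size_polyXn // size_polyN size_polyXn.
have pK_neq0 : ('X^(2 ^ b) - 'X^(2 ^ a) : {poly K}) != 0.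
  by rewrite -size_poly_gt0 size_pK.
have roots : all (root ('X^(2 ^ b) - 'X^(2 ^ a))) (enum K).
  by apply/allP => y _; rewrite rootE !hornerE frobK subrr.
have := max_poly_roots pK_neq0 roots (enum_uniq _).
by rewrite -cardE card_qfpoly size_f card_Fp // size_pK ltnS leq_exp2l.
Qed.

Lemma exponent_cofactor_bound (f : {poly 'F_2}) n m l :
  (0 < n)%N -> (0 < l)%N -> size f = (n * m).+1 -> irreducible_poly f ->
  f %| 'X^((2 ^ n - 1) * l) - 1 -> (m <= l)%N.
Proof.
move=> n_gt0 l_gt0 size_f irr_f dvd_f.
have r_gt0 : (0 < 2 ^ n - 1)%N by rewrite subn_gt0 -{1}(expn0 2) ltn_exp2l.
have pow_mod_r : 2 ^ n = 1 %[mod 2 ^ n - 1] by rewrite -{1}(subnK (expn_gt0 2 n)) modnDl.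
have [x [y [/andP[lt_xy le_yl] eq_xy]]] := expn_mod_collision r_gt0 l_gt0 pow_mod_r.
have lt_nx_ny : (n * x < n * y)%N by rewrite ltn_pmul2l.
have dvd_X : f %| 'X^(2 ^ (n * y)) - 'X^(2 ^ (n * x)).
  by rewrite !expnM (dvdp_Xn_sub_Xn_mod dvd_f (esym eq_xy)).
have le_nm_ny := dvdp_Xpow2B_leq irr_f size_f lt_nx_ny dvd_X.
by rewrite -(leq_pmul2l n_gt0) (leq_trans le_nm_ny) // leq_mul2l le_yl orbT.
Qed.

End FrobeniusBound.

Section Folding.
Variables r l : nat.
Hypotheses (r_gt0 : 0 < r) (l_gt0 : 0 < l) (co_rl : coprime r l).
Local Notation e := (r * l).
Local Notation crt := (chinese r l).
Let crt_modl := chinese_modl co_rl.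
Let crt_modr := chinese_modr co_rl.

Lemma rl_gt0 : 0 < e. Proof. by rewrite muln_gt0 r_gt0. Qed.

Lemma eq_mod_chinese i j : i = j %[mod r] -> i = j %[mod l] -> i = j %[mod e].
Proof. by move=> eq_r eq_l; apply/eqP; rewrite chinese_remainder // eq_r eq_l !eqxx. Qed.

Lemma chineseD u v p q : crt (u + p) (v + q) = crt u v + crt p q %[mod e].
Proof.
apply: eq_mod_chinese.
  by rewrite crt_modl -[RHS]modnDm !crt_modl modnDm.
by rewrite crt_modr -[RHS]modnDm !crt_modr modnDm.
Qed.

Lemma chinese_mod i : crt (i %% r) (i %% l) = i %[mod e].
Proof. by apply: eq_mod_chinese; rewrite ?crt_modl ?crt_modr modn_mod. Qed.

Lemma chinese00 : crt 0 0 = 0.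
Proof. by rewrite /chinese !mul0n. Qed.

Lemma chinese_mod_inj (p p' : 'I_r) (q q' : 'I_l) :
  crt p q = crt p' q' %[mod e] -> p = p' /\ q = q'.
Proof.
move=> eq_pq; split; apply: val_inj.
  have := congr1 (modn^~ r) eq_pq; rewrite /= !modn_dvdm ?dvdn_mulr //.
  by rewrite !crt_modl !modn_small.
have := congr1 (modn^~ l) eq_pq; rewrite /= !modn_dvdm ?dvdn_mull //.
by rewrite !crt_modr !modn_small.
Qed.

Lemma mem_Rset00 n m (i : 'I_e) :
  (i \in Rset n m r l e 0 0) = (i %% r < n) && (i %% l < m).
Proof. by rewrite inE !subn0 !modnDr. Qed.

Lemma card_Rset00 n m : n <= r -> m <= l -> n * m <= #|Rset n m r l e 0 0|.
Proof.
move=> le_nr le_ml.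
pose phi (uv : 'I_n * 'I_m) : 'I_e := Ordinal (ltn_pmod (crt uv.1 uv.2) rl_gt0).
have phi_mod uv : (phi uv %% r = uv.1) /\ (phi uv %% l = uv.2).
  split; rewrite /= modn_dvdm.
  - by rewrite crt_modl modn_small // (leq_trans (ltn_ord _)).
  - exact: dvdn_mulr.
  - by rewrite crt_modr modn_small // (leq_trans (ltn_ord _)).
  - exact: dvdn_mull.
have phi_inj : injective phi.
  move=> [u v] [u' v'] eq_phi; have [] := phi_mod (u, v); have [] := phi_mod (u', v').
  by rewrite eq_phi /= => -> -> eq_u eq_v; congr (_, _); apply: val_inj.
have <- : #|phi @: [set: 'I_n * 'I_m]| = n * m.
  by rewrite card_imset // cardsT card_prod !card_ord.
apply: subset_leq_card; apply/subsetP => _ /imsetP[uv _ ->].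
by have [eq_u eq_v] := phi_mod uv; rewrite mem_Rset00 eq_u eq_v !ltn_ord.
Qed.

Lemma aget_mod (A : 'M['F_2]_(r, l)) i j i' j' :
  i = i' %[mod r] -> j = j' %[mod l] -> aget A i j = aget A i' j'.
Proof. by rewrite /aget => -> ->. Qed.

Lemma aget_ord (A : 'M['F_2]_(r, l)) (i : 'I_r) (j : 'I_l) : aget A i j = A i j.
Proof.
rewrite /aget !insubT ?ltn_mod ?r_gt0 ?l_gt0 // => lt_i lt_j.
by congr (A _ _); apply: val_inj; rewrite /= modn_small.
Qed.

Definition fold_seq (a : nat -> 'F_2) : 'M['F_2]_(r, l) := \matrix_(i, j) a (crt i j).

Definition seq_window n m (a : nat -> 'F_2) : 'M['F_2]_(n, m) :=
  \matrix_(u, v) a (crt u v).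

Lemma fold_seqD a b : fold_seq (a \+ b)%R = (fold_seq a + fold_seq b)%R.
Proof. by apply/matrixP => i j; rewrite !mxE. Qed.

Lemma seq_windowD n m a b :
  seq_window n m (a \+ b)%R = (seq_window n m a + seq_window n m b)%R.
Proof. by apply/matrixP => i j; rewrite !mxE. Qed.

Lemma aget_fold_seq a i j : periodic e a -> aget (fold_seq a) i j = a (crt i j).
Proof.
move=> per_a; rewrite (aget_mod _ (esym (modn_mod i r)) (esym (modn_mod j l))).
rewrite (aget_ord _ (Ordinal (ltn_pmod i r_gt0)) (Ordinal (ltn_pmod j l_gt0))) mxE /=.
by apply: periodic_mod per_a _; apply: eq_mod_chinese; rewrite ?crt_modl ?crt_modr modn_mod.
Qed.

Lemma fold_seq_aget (A : 'M['F_2]_(r, l)) a : periodic e a ->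
  (forall i, i < e -> aget A i i = a i) -> A = fold_seq a.
Proof.
move=> per_a A_a; apply/matrixP => i j; rewrite mxE -aget_ord.
rewrite (@aget_mod _ _ _ (crt i j %% e) (crt i j %% e)).
- by rewrite A_a ?ltn_pmod ?rl_gt0 // (periodic_mod per_a (modn_mod _ _)).
- by rewrite modn_dvdm ?dvdn_mulr // crt_modl.
- by rewrite modn_dvdm ?dvdn_mull // crt_modr.
Qed.

Lemma window_fold_seq n m a p q : periodic e a ->
  window n m (fold_seq a) p q = seq_window n m (seq_shift a (crt p q)).
Proof.
move=> per_a; apply/matrixP => u v; rewrite !mxE aget_fold_seq //.
by rewrite /seq_shift -(periodic_mod per_a (chineseD u v p q)) (addnC p) (addnC q).
Qed.

Lemma cshift_fold_seq a p q : periodic e a ->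
  cshift (fold_seq a) p q = fold_seq (seq_shift a (crt p q)).
Proof.
move=> per_a; apply/matrixP => i j; rewrite !mxE aget_fold_seq //.
by rewrite /seq_shift (periodic_mod per_a (chineseD _ _ _ _)).
Qed.

Lemma shift_chinese_mod (T : Type) (a : nat -> T) d : periodic e a ->
  seq_shift a (crt (d %% r) (d %% l)) =1 seq_shift a d.
Proof.
by move=> per_a j; apply: (periodic_mod per_a); rewrite -modnDmr chinese_mod modnDmr.
Qed.

Lemma fold_seq_inj a b : periodic e a -> periodic e b -> fold_seq a = fold_seq b -> a =1 b.
Proof.
move=> per_a per_b eq_ab j; rewrite -(periodic_mod per_a (chinese_mod j)).
rewrite -(periodic_mod per_b (chinese_mod j)).
have /matrixP/(_ (Ordinal (ltn_pmod j r_gt0)) (Ordinal (ltn_pmod j l_gt0))) := eq_ab.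
by rewrite !mxE.
Qed.

End Folding.

Section FoldedLFSR.
Local Open Scope ring_scope.
Variables (n m r l : nat) (f : {poly 'F_2}) (I : finType).
Variables (s : I -> nat -> 'F_2) (A : I -> 'M['F_2]_(r, l)).
Local Notation e := (r * l)%N.
Local Notation crt := (chinese r l).
Local Notation lfsr_f := (lfsr f (n * m)).
Hypotheses (r_gt0 : (0 < r)%N) (l_gt0 : (0 < l)%N) (co_rl : coprime r l).
Hypotheses (le_nr : (n <= r)%N) (le_ml : (m <= l)%N).
Hypotheses (size_f : size f = (n * m).+1) (irr_f : irreducible_poly f).
Hypothesis exp_f : is_exponent f e.
Hypothesis s_lfsr : forall x, lfsr_f (s x) /\ exists j, s x j != 0.
Hypothesis s_repr : forall a, lfsr_f a -> (exists j, a j != 0) ->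
  exists! x, seq_shift_of (s x) a.
Hypothesis A_aget : forall x i, (i < e)%N -> aget (A x) i i = s x i.
Hypothesis Rset_ndvd : ~~ (f %| gR (Rset n m r l e 0 0)).

Lemma lfsr_periodic a : lfsr_f a -> periodic e a.
Proof.
by case: exp_f => _ dvd_f _; rewrite lfsr_annihilates // => /(annihilates_periodic dvd_f).
Qed.

Lemma lfsr_shift_mod a u u' : lfsr_f a -> (exists j, a j != 0) ->
  seq_shift a u =1 seq_shift a u' -> u = u' %[mod e].
Proof.
move=> lfsr_a nz_a; wlog le_uu' : u u' / (u <= u')%N.
  move=> wlog_le eq_sh; case/orP: (leq_total u u') => /wlog_le; first exact.
  by move=> /(_ (fun j => esym (eq_sh j))) /esym.
move=> eq_sh; have per_a := lfsr_periodic lfsr_a; set t := (u' - u)%N.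
have le_u_ue : (u <= u * e)%N by rewrite leq_pmulr ?(rl_gt0 r_gt0 l_gt0).
(* Shifting by u * e changes nothing and leaves room to subtract u. *)
have per_t : periodic (t %% e) a.
  move=> j; rewrite (periodic_mod per_a (modnDmr j t e)).
  have := eq_sh (u * e - u + j)%N; rewrite /seq_shift.
  have -> : (u * e - u + j + u = u * e + j)%N by lia.
  have -> : (u * e - u + j + u' = u * e + (j + t))%N by rewrite /t; lia.
  by rewrite !(periodic_mod per_a (modnMDl _ _ _)).
case: (posnP (t %% e)) => [t0 | t_gt0].
  by rewrite -(subnKC le_uu') -modnDmr -/t t0 addn0.
have ann_a := (lfsr_annihilates a size_f).1 lfsr_a.
case: exp_f => _ _ /(_ _ t_gt0 (periodic_annihilates_dvdp irr_f ann_a per_t nz_a)).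
by rewrite leqNgt ltn_pmod ?(rl_gt0 r_gt0 l_gt0).
Qed.

Lemma seq_window_eq0 a : lfsr_f a -> seq_window r l n m a = 0 -> forall j, a j = 0.
Proof.
move=> lfsr_a win0; have le_nm_R := card_Rset00 r_gt0 l_gt0 co_rl le_nr le_ml.
apply: (annihilates_eq0_on size_f le_nm_R).
- by move=> Q; apply: gR_ndvd_subset_sum.
- exact: (lfsr_annihilates a size_f).1.
move=> i; rewrite mem_Rset00 => /andP[lt_n lt_m].
have /matrixP/(_ (Ordinal lt_n) (Ordinal lt_m)) := win0; rewrite !mxE => <-.
exact: esym (periodic_mod (lfsr_periodic lfsr_a) (chinese_mod co_rl i)).
Qed.

Lemma seq_window_onto W : exists2 a, lfsr_f a & seq_window r l n m a = W.
Proof.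
pose a_ (w : {ffun 'I_(n * m) -> 'F_2}) j := \sum_(k < n * m) w k * ('X^j %% f)`_k.
have lfsr_a w : lfsr_f (a_ w) by rewrite lfsr_annihilates //; apply: annihilates_modp_coords.
have win_inj : injective (fun w => seq_window r l n m (a_ w)).
  move=> w w' /= /eqP; rewrite -addmxF2_eq0 -seq_windowD => /eqP win0.
  apply/ffunP => k; have /eqP := seq_window_eq0 (lfsrD size_f (lfsr_a w) (lfsr_a w')) win0 k.
  by rewrite addF2_eq0 /a_ !modp_coords_small // => /eqP.
have card_le : (#|{: 'M['F_2]_(n, m)}| <= #|{: {ffun 'I_(n * m) -> 'F_2}}|)%N.
  by rewrite card_mx card_ffun !card_ord.
by have /codomP[w ->] := inj_card_onto win_inj card_le W; exists (a_ w).
Qed.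

Lemma A_fold_seq x : A x = fold_seq r l (s x).
Proof. exact: fold_seq_aget (lfsr_periodic (s_lfsr x).1) (A_aget x). Qed.

Lemma window_A x p q :
  window n m (A x) p q = seq_window r l n m (seq_shift (s x) (crt p q)).
Proof. by rewrite A_fold_seq window_fold_seq //; apply: lfsr_periodic (s_lfsr x).1. Qed.

Lemma window_unique x y (p p' : 'I_r) (q q' : 'I_l) :
  window n m (A x) p q = window n m (A y) p' q' -> [/\ x = y, p = p' & q = q'].
Proof.
rewrite !window_A => /eqP; rewrite -addmxF2_eq0 -seq_windowD => /eqP win0.
set a := seq_shift (s x) (crt p q).
have lfsr_a : lfsr_f a := lfsr_shift _ size_f (s_lfsr x).1.
have eq_sh : a =1 seq_shift (s y) (crt p' q').
  move=> j; apply/eqP; rewrite -addF2_eq0; apply/eqP.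
  exact: seq_window_eq0 (lfsrD size_f lfsr_a (lfsr_shift _ size_f (s_lfsr y).1)) win0 j.
have nz_a : exists j, a j != 0.
  exact: periodic_shift_neq (rl_gt0 r_gt0 l_gt0) (lfsr_periodic (s_lfsr x).1) (s_lfsr x).2.
have [z [_ z_uniq]] := s_repr lfsr_a nz_a.
have eq_xy : x = y.
  by rewrite -(z_uniq x) ?(z_uniq y) //; [exists (crt p' q') | exists (crt p q)].
subst y; have := lfsr_shift_mod (s_lfsr x).1 (s_lfsr x).2 eq_sh.
by case/(chinese_mod_inj co_rl) => -> ->.
Qed.

Lemma window_exists W : W != 0 -> exists x (p : 'I_r) (q : 'I_l), window n m (A x) p q = W.
Proof.
move=> W_neq0; have [a lfsr_a win_a] := seq_window_onto W.
have nz_a : exists j, a j != 0.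
  by case/matrix0Pn: W_neq0 => u [v]; rewrite -win_a mxE; exists (crt u v).
have [x [[d sh_d] _]] := s_repr lfsr_a nz_a.
exists x, (Ordinal (ltn_pmod d r_gt0)), (Ordinal (ltn_pmod d l_gt0)).
rewrite window_A -win_a; apply/matrixP => u v; rewrite !mxE.
by rewrite (shift_chinese_mod co_rl _ (lfsr_periodic (s_lfsr x).1)) /seq_shift sh_d.
Qed.

Lemma fold_lfsr_shift b : lfsr_f b -> fold_seq r l b != 0 ->
  exists2 B, B \in [set A x | x in I] &
    exists (p : 'I_r) (q : 'I_l), fold_seq r l b = cshift B p q.
Proof.
move=> lfsr_b /matrix0Pn[i [j]]; rewrite mxE => nz_b.
have [z [[d sh_d] _]] := s_repr lfsr_b (ex_intro (fun k => b k != 0) _ nz_b).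
exists (A z); first exact: imset_f.
exists (Ordinal (ltn_pmod d r_gt0)), (Ordinal (ltn_pmod d l_gt0)).
have per_z := lfsr_periodic (s_lfsr z).1.
rewrite A_fold_seq cshift_fold_seq //; apply/matrixP => i' j'; rewrite !mxE.
by rewrite (shift_chinese_mod co_rl _ per_z) /seq_shift sh_d.
Qed.

Lemma fold_seq_shift_neq x (p : 'I_r) (q : 'I_l) :
  (p != 0%N :> nat) || (q != 0%N :> nat) ->
  fold_seq r l (s x) != fold_seq r l (seq_shift (s x) (crt p q)).
Proof.
have [lfsr_x nz_x] := s_lfsr x; have per_x := lfsr_periodic lfsr_x.
apply: contraTneq; move/(fold_seq_inj r_gt0 l_gt0 co_rl per_x).
move=> /(_ (lfsr_periodic (lfsr_shift _ size_f lfsr_x))) eq_sh.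
have sh0 : seq_shift (s x) 0 =1 seq_shift (s x) (crt p q).
  by move=> j; rewrite /seq_shift addn0 eq_sh.
have := lfsr_shift_mod lfsr_x nz_x sh0; rewrite -{1}(chinese00 r l).
by case/(chinese_mod_inj co_rl (p := Ordinal r_gt0) (q := Ordinal l_gt0)) => <- <-.
Qed.

Lemma folded_PRAC : PRAC n m [set A x | x in I].
Proof.
split=> [W W_neq0 | _ A' /imsetP[x _ ->] A'_cases].
  have [x [p [q win_W]]] := window_exists W_neq0.
  exists (A x, (p, q)); split=> [|[B [p' q']] /= [/imsetP[y _ ->] win_y]].
    by split=> //; apply: imset_f.
  by case: (window_unique (etrans win_y (esym win_W))) => -> -> ->.
have [lfsr_x _] := s_lfsr x; have per_x := lfsr_periodic lfsr_x.
case: A'_cases => [[/imsetP[y _ ->] neq_yx] | [p [q [pq_neq0 ->]]]].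
  rewrite !A_fold_seq -fold_seqD.
  apply: fold_lfsr_shift (lfsrD size_f lfsr_x (s_lfsr y).1) _.
  by rewrite fold_seqD addmxF2_eq0 -!A_fold_seq eq_sym.
rewrite A_fold_seq cshift_fold_seq // -fold_seqD.
apply: fold_lfsr_shift (lfsrD size_f lfsr_x (lfsr_shift _ size_f lfsr_x)) _.
by rewrite fold_seqD addmxF2_eq0 fold_seq_shift_neq.
Qed.

End FoldedLFSR.

Local Open Scope ring_scope.
Unset Implicit Arguments.

Theorem theorem7 (n m : nat) (f : {poly 'F_2}) (e l : nat)
  (I : finType) (s : I -> nat -> 'F_2) (A : I -> 'M['F_2]_(2 ^ n - 1, l)) :
  (1 <= n)%N -> (1 <= m)%N ->
  size f = (n * m).+1 -> irreducible_poly f -> f != 'X ->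
  is_exponent f e ->
  e = ((2 ^ n - 1) * l)%N -> coprime (2 ^ n - 1) l ->
  (* s is a system of representatives of the shift classes of the
     nonzero sequences satisfying the recurrence *)
  (forall x : I, lfsr f (n * m) (s x) /\ exists j, s x j != 0) ->
  (forall a : nat -> 'F_2, lfsr f (n * m) a -> (exists j, a j != 0) ->
     exists! x : I, seq_shift_of (s x) a) ->
  (* A x is the folding of one period of s x *)
  (forall (x : I) (i : nat), (i < e)%N -> aget (A x) i i = s x i) ->
  (forall (p : 'I_(2 ^ n - 1)) (q : 'I_l),
     ~~ (f %| gR (Rset n m (2 ^ n - 1) l e p q))) ->
  PRAC n m [set A x | x in I].
Proof.
(* [1 <= m] and [f != 'X] are implied: f is irreducible of size (n * m).+1,
   and 'X does not divide 'X^e - 1. *)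
move=> n_gt0 _ size_f irr_f _ exp_f e_def co_rl s_lfsr s_repr A_aget Rset_ndvd.
subst e; have [rl_gt0 dvd_f _] := exp_f.
have r_gt0 : (0 < 2 ^ n - 1)%N by rewrite subn_gt0 -{1}(expn0 2) ltn_exp2l.
have l_gt0 : (0 < l)%N by move: rl_gt0; rewrite muln_gt0 => /andP[].
have le_nr : (n <= 2 ^ n - 1)%N by rewrite subn1 -ltnS prednK ?expn_gt0 // ltn_expl.
have le_ml := exponent_cofactor_bound n_gt0 l_gt0 size_f irr_f dvd_f.
exact: folded_PRAC r_gt0 l_gt0 co_rl le_nr le_ml size_f irr_f exp_f s_lfsr s_repr A_aget
  (Rset_ndvd (Ordinal r_gt0) (Ordinal l_gt0)).
Qed.
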